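(* Let $p,q\geq 5$ be two distinct primes. Then there is no $(p+q)\times(p+q)$ circulant complex Hadamard matrix all of whose entries are $pq$-th roots of unity, i.e. $C^{circ}_{p+q}(pq)=\emptyset$.
   Context: A complex Hadamard matrix of order $n$ is a matrix $H\in M_n(\mathbb C)$ with $|H_{ij}|=1$ for all $i,j$ and pairwise orthogonal rows. A matrix $H=(H_{ij})_{i,j=0}^{n-1}$ is circulant if $H_{ij}$ depends only on $j-i$ modulo $n$. $C^{circ}_n(l)$ denotes the set of $n\times n$ circulant complex Hadamard matrices whose entries are all $l$-th roots of unity. *)

(* complex numbers modelled by algC (algebraic complex numbers);
   roots of unity are algebraic, so every matrix in C^circ_n(l) has algC entries. *)
From HB Require Import structures.
From mathcomp Require Import all_boot all_order all_algebra all_field.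
Set Implicit Arguments. Unset Strict Implicit. Unset Printing Implicit Defensive.
Import Order.TTheory GRing.Theory Num.Theory.
Local Open Scope ring_scope.

Definition complex_hadamard (n : nat) (H : 'M[algC]_n) : Prop :=
  (forall i j, `|H i j| = 1) /\
  (forall i j : 'I_n, i != j -> \sum_(k < n) H i k * (H j k)^* = 0).

Definition circulant (n : nat) (H : 'M[algC]_n) : Prop :=
  forall i j i' j' : 'I_n,
    ((j + (n - i)) %% n = (j' + (n - i')) %% n)%N -> H i j = H i' j'.

Definition entries_roots_of_unity (l n : nat) (H : 'M[algC]_n) : Prop :=
  forall i j, (H i j) ^+ l = 1.

Definition Ccirc (n l : nat) (H : 'M[algC]_n) : Prop :=
  complex_hadamard H /\ circulant H /\ entries_roots_of_unity l H.

From HB Require Import structures.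
From mathcomp Require Import all_boot all_order all_algebra all_field.
From mathcomp Require Import zify ring.

(* Let z be a primitive pq-th root of unity; every entry of H in
   C^circ_(p+q)(pq) is a power z^(G i k).  For two distinct rows i, j,
   orthogonality says that the p + q roots z^(G i k - G j k) sum to zero, and
   circulance makes all row products equal, so the exponent sums of the rows
   agree modulo pq.  Such a vanishing sum is very rigid
   (vanishing_sum_structure): conjugating it by the Galois automorphisms
   z |-> z^(rq + tp) and summing yields, for every residue x,
     p #{e = x mod p} + q #{e = x mod q} = (p + q) + pq #{e = x mod pq},
   whence every residue class modulo p has size 1 mod q; as the exponent sum
   is 0 mod p, the class of 0 has q + 1 elements and the others one, and
   symmetrically for q.  So each exponent difference is divisible by p or by
   q, but neither prime divides all of them.  Finally every entry of a
   circulant matrix occurs in column 0, so r |-> (G r 0 mod p, G r 0 mod q)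
   maps distinct rows to pairs sharing a coordinate while neither coordinate
   is constant, which is impossible (pairs_sharing_coordinate). *)

Set Implicit Arguments.
Unset Strict Implicit.
Unset Printing Implicit Defensive.

Import Order.TTheory GRing.Theory Num.Theory.
Local Open Scope ring_scope.

Lemma eqn_modMl_coprime a m n d : coprime a d ->
  (a * m == a * n %[mod d])%N = (m == n %[mod d])%N.
Proof.
move=> co_ad; wlog le_nm : m n / (n <= m)%N.
  move=> W; case: (leqP n m) => [/W //|/ltnW /W].
  by rewrite eq_sym [in RHS]eq_sym.
rewrite !eqn_mod_dvd ?leq_mul2l ?le_nm ?orbT // -mulnBr Gauss_dvdr //.
by rewrite coprime_sym.
Qed.

(* Modulo any divisor d of N, adding N.-1 * b amounts to subtracting b. *)
Lemma dvdn_addMpred d N a b : (0 < N)%N -> (d %| N)%N ->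
  (d %| a + N.-1 * b)%N = (a == b %[mod d])%N.
Proof.
move=> N_gt0 /dvdnP[c defN]; subst N.
transitivity (a + (c * d).-1 * b + b == 0 + b %[mod d])%N.
  by rewrite eqn_modDr mod0n.
rewrite -addnA -{2}(mul1n b) -mulnDl addn1 prednK //.
by rewrite mulnAC addnC modnMDl.
Qed.

Lemma coprime_addMM p q r t : prime p -> prime q -> p != q ->
  ~~ (p %| r)%N -> ~~ (q %| t)%N -> coprime (r * q + t * p) (p * q).
Proof.
move=> pp pq npq pNr qNt; rewrite coprimeMr !(coprime_sym (_ + _)).
rewrite !prime_coprime // (dvdn_addl _ (dvdn_mull t (dvdnn p))).
rewrite (dvdn_addr _ (dvdn_mull r (dvdnn q))).
by rewrite !Euclid_dvdM // (negbTE pNr) (negbTE qNt) !dvdn_prime2 // [q == p]eq_sym npq.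
Qed.

Lemma sum_prim_root_powM (R : idomainType) (w : R) (N m : nat) :
  N.-primitive_root w -> \sum_(i < N) w ^+ (i * m) = if (N %| m)%N then N%:R else 0.
Proof.
move=> pw; under eq_bigr => i _ do rewrite mulnC exprM.
case: ifP => [dvd_Nm | Ndvd_Nm].
  have -> : w ^+ m = 1 by apply/eqP; rewrite -(prim_order_dvd pw).
  by rewrite (eq_bigr (fun _ => 1)) ?sumr_const ?card_ord // => i _; rewrite expr1n.
have wm_neq1 : w ^+ m - 1 != 0 by rewrite subr_eq0 -(prim_order_dvd pw) Ndvd_Nm.
apply: (mulfI wm_neq1); rewrite mulr0.
by rewrite -subrX1 -exprM mulnC exprM (prim_expr_order pw) expr1n subrr.
Qed.

Lemma sum_prim_root_powSM (R : idomainType) (w : R) (N m : nat) :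
  N.-primitive_root w ->
  \sum_(i < N.-1) w ^+ (i.+1 * m) = (if (N %| m)%N then N%:R else 0) - 1.
Proof.
move=> pw; rewrite -(sum_prim_root_powM m pw) -(prednK (prim_order_gt0 pw)).
by rewrite big_ord_recl mul0n expr0 addrAC subrr add0r.
Qed.

(* Galois conjugation z |-> z^j (j coprime to N) preserves vanishing sums of
   N-th roots of unity. *)
Lemma vanishing_sum_powM N (z : algC) (I : finType) (e : I -> nat) j :
  N.-primitive_root z -> \sum_k z ^+ e k = 0 -> coprime j N ->
  \sum_k z ^+ (j * e k) = 0.
Proof.
move=> pz sum0 co_jN; have [u uE] := Qn_aut_exists co_jN.
have unity_z k : (z ^+ e k) ^+ N = 1.
  by rewrite -exprM mulnC exprM (prim_expr_order pz) expr1n.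
transitivity (u (\sum_k z ^+ e k)); last by rewrite sum0 rmorph0.
by rewrite rmorph_sum; apply: eq_bigr => k _; rewrite uE // -exprM mulnC.
Qed.

Lemma conjC_unity_root N (w : algC) : (0 < N)%N -> w ^+ N = 1 -> w^* = w ^+ N.-1.
Proof.
move=> N_gt0 wN1.
have normw : `|w| = 1.
  by apply/eqP; rewrite -(pexpr_eq1 N_gt0) ?normr_ge0 // -normrX wN1 normr1.
have w_neq0 : w != 0 by rewrite -normr_eq0 normw oner_eq0.
apply: (mulfI w_neq0); rewrite -exprS prednK // wN1.
by rewrite -normCK normw expr1n.
Qed.

Lemma sum_residue_indicator d a (F : nat -> nat) : (0 < d)%N ->
  (\sum_(x < d) (a == x %[mod d]) * F x = F (a %% d))%N.
Proof.
move=> d_gt0; rewrite (bigD1 (Ordinal (ltn_pmod a d_gt0))) //= modn_mod eqxx mul1n.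
rewrite big1 ?addn0 // => x neq_x; rewrite (modn_small (ltn_ord x)).
suff /negbTE -> : (a %% d != x)%N by rewrite mul0n.
by apply: contraNneq neq_x => ax; apply/eqP/val_inj/esym.
Qed.

Lemma sizes_one_mod (J : finType) (R : J -> nat) q : (1 < q)%N ->
  (forall x, R x = 1 %[mod q])%N -> (\sum_x R x = #|J| + q)%N ->
  exists x0, forall x, R x = if x == x0 then q.+1 else 1%N.
Proof.
move=> q_gt1 R1 sumR.
have R_def x : R x = (R x %/ q * q + 1)%N.
  by rewrite {1}(divn_eq (R x) q) R1 (modn_small q_gt1).
have /sum_nat_eq1[x0 [_ t_x0 t_other]] : (\sum_x R x %/ q == 1)%N.
  rewrite -(eqn_pmul2r (ltnW q_gt1)) mul1n big_distrl /= -(eqn_add2r #|J|).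
  rewrite [(q + _)%N]addnC -sumR -sum1_card -big_split /=.
  by apply/eqP/eq_bigr => x _; rewrite -R_def.
exists x0 => x; rewrite R_def; case: eqP => [-> | /eqP neq_x].
  by rewrite t_x0 mul1n addn1.
by rewrite t_other.
Qed.

(* Let #|I| = p + q with p an odd prime and q a prime different from p.  If
   the exponents e k have sum divisible by p and every residue class modulo p
   has size 1 mod q, then the class of 0 has q + 1 elements and the others one:
   by the previous lemma a single class x0 is large, and comparing
   \sum e k = \sum_x x #{e = x} = x0 q + p (p - 1) / 2 modulo p gives x0 = 0. *)
Lemma residue_class_sizes p q (I : finType) (e : I -> nat) :
  prime p -> prime q -> p != q -> odd p -> #|I| = (p + q)%N ->
  (p %| \sum_k e k)%N -> (forall x, \sum_k (e k == x %[mod p]) = 1 %[mod q])%N ->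
  forall y, (\sum_k (e k == y %[mod p]) = if p %| y then q.+1 else 1)%N.
Proof.
move=> pp pq npq odd_p cardI p_dvd_sum count1.
have p_gt0 := prime_gt0 pp.
pose R (x : 'I_p) := (\sum_k (e k == x %[mod p]))%N.
have sumR : (\sum_x R x = #|'I_p| + q)%N.
  rewrite card_ord -cardI -sum1_card exchange_big /=; apply: eq_bigr => k _.
  rewrite -(sum_residue_indicator (e k) (fun _ => 1%N) p_gt0).
  by apply: eq_bigr => x _; rewrite muln1.
have [x0 Rx0] := @sizes_one_mod _ R q (prime_gt1 pq) (fun x => count1 x) sumR.
have weighted : (\sum_(x < p) x * R x = \sum_k e k %% p)%N.
  rewrite /R; under [LHS]eq_bigr => x _ do rewrite big_distrr /=.
  rewrite exchange_big /=; apply: eq_bigr => k _.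
  rewrite -[RHS]/(id (e k %% p))%N -(sum_residue_indicator _ _ p_gt0).
  by apply: eq_bigr => x _; rewrite mulnC.
have sum_residues : (\sum_(x < p) x = p * p.-1./2)%N.
  by rewrite -(bin2odd odd_p) -bin2_sum big_mkord.
have x0_eq0 : val x0 = 0%N.
  have : (p %| \sum_(x < p) x * R x)%N by rewrite weighted /dvdn modn_summ.
  have -> : (\sum_(x < p) x * R x = p * p.-1./2 + x0 * q)%N.
    rewrite -sum_residues (bigD1 x0) //= [in RHS](bigD1 x0) //= Rx0 eqxx.
    rewrite (eq_bigr (fun x : 'I_p => x : nat)) => [|x /negbTE neq_x].
      by rewrite mulnS; ring.
    by rewrite Rx0 neq_x muln1.
  rewrite (dvdn_addr _ (dvdn_mulr _ (dvdnn p))) Euclid_dvdM // [(p %| q)%N]dvdn_prime2 //.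
  rewrite (negbTE npq) orbF; case: (posnP x0) => // x0_gt0 /(dvdn_leq x0_gt0).
  by rewrite leqNgt ltn_ord.
move=> y; have -> : (\sum_k (e k == y %[mod p]) = R (Ordinal (ltn_pmod y p_gt0)))%N.
  by rewrite /R /= modn_mod.
by rewrite Rx0 -val_eqE /= x0_eq0.
Qed.

Section VanishingSumsOfRootsOfUnity.

Variables (p q : nat) (z : algC).
Hypotheses (pp : prime p) (pq : prime q) (npq : p != q).
Hypothesis pz : (p * q).-primitive_root z.

(* Since z^q and z^p are primitive p-th and q-th roots of unity, the product of
   the two "indicator minus one" functions of p | m and q | m expands into a
   double sum of powers z^(j m), with j = (r+1) q + (t+1) p a unit mod pq. *)
Lemma indicator_product_expansion m :
  ((if (p %| m)%N then p%:R else 0) - 1) * ((if (q %| m)%N then q%:R else 0) - 1)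
  = \sum_(r < p.-1) \sum_(t < q.-1) z ^+ ((r.+1 * q + t.+1 * p) * m).
Proof.
have pw : p.-primitive_root (z ^+ q).
  by have := dvdn_prim_root pz (dvdn_mulr q (dvdnn p)); rewrite mulKn ?prime_gt0.
have qw : q.-primitive_root (z ^+ p).
  by have := dvdn_prim_root pz (dvdn_mull p (dvdnn q)); rewrite mulnK ?prime_gt0.
rewrite -(sum_prim_root_powSM m pw) -(sum_prim_root_powSM m qw).
rewrite mulr_suml; apply: eq_bigr => r _; rewrite mulr_sumr; apply: eq_bigr => t _.
by rewrite -!exprM -exprD; congr (_ ^+ _); ring.
Qed.

(* If n powers z^(e k) sum to zero then, for every residue x, counting the
   exponents congruent to x modulo p, modulo q and modulo both gives
     p #{e = x mod p} + q #{e = x mod q} = n + pq #{e = x mod p and mod q}: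
   expand the product of indicators with the lemma above (applied to the
   shifted exponents e k - x) and kill every term by Galois conjugation. *)
Lemma residue_count_identity (I : finType) (e : I -> nat) x :
  \sum_k z ^+ e k = 0 ->
  (p * \sum_k (e k == x %[mod p]) + q * \sum_k (e k == x %[mod q])
   = #|I| + p * q * \sum_k ((e k == x %[mod p]) && (e k == x %[mod q])))%N.
Proof.
move=> sum0; pose f k := (e k + (p * q).-1 * x)%N.
have sumf0 : \sum_k z ^+ f k = 0.
  by under eq_bigr do rewrite exprD; rewrite -mulr_suml sum0 mul0r.
have pq_gt0 : (0 < p * q)%N by rewrite muln_gt0 !prime_gt0.
have fp k : (p %| f k)%N = (e k == x %[mod p]).
  by apply: dvdn_addMpred => //; apply: dvdn_mulr.
have fq k : (q %| f k)%N = (e k == x %[mod q]).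
  by apply: dvdn_addMpred => //; apply: dvdn_mull.
have expansion0 : \sum_k ((if (e k == x %[mod p]) then p%:R else 0) - 1) *
                         ((if (e k == x %[mod q]) then q%:R else 0) - 1) = 0 :> algC.
  under eq_bigr => k _ do rewrite -fp -fq indicator_product_expansion.
  rewrite exchange_big big1 // => r _; rewrite exchange_big big1 // => t _.
  apply: (vanishing_sum_powM pz sumf0); apply: coprime_addMM => //.
    by rewrite gtnNdvd // -ltn_predRL.
  by rewrite gtnNdvd // -ltn_predRL.
have term (b c : bool) : ((if b then p%:R else 0) - 1) * ((if c then q%:R else 0) - 1)
    = ((b && c) * (p * q) + 1)%N%:R - (b * p + c * q)%N%:R :> algC.
  by case: b; case: c; rewrite /= ?natrD ?natrM; ring.
move: expansion0; rewrite (eq_bigr _ (fun k _ => term _ _)) sumrB -!natr_sum.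
move/eqP; rewrite subr_eq0 eqr_nat => /eqP.
rewrite !big_split /= sum1_card -!big_distrl /= => E.
by rewrite [(p * _)%N]mulnC [(q * _)%N]mulnC -E addnC mulnC.
Qed.

(* When there are n = p + q exponents, reducing the identity above modulo q
   shows that every residue class modulo p has size 1 mod q. *)
Lemma residue_count_one_mod (I : finType) (e : I -> nat) x :
  #|I| = (p + q)%N -> \sum_k z ^+ e k = 0 ->
  (\sum_k (e k == x %[mod p]) = 1 %[mod q])%N.
Proof.
move=> cardI sum0; have := residue_count_identity x sum0; rewrite cardI.
set P := (\sum_k (e k == x %[mod p]))%N; set Q := (\sum_k (e k == x %[mod q]))%N.
set B := (\sum_k _)%N => E.
have co_pq : coprime p q by rewrite prime_coprime // dvdn_prime2.
apply/eqP; rewrite -(eqn_modMl_coprime _ _ co_pq) muln1.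
have E' : (p * P + Q * q = (1 + p * B) * q + p)%N by rewrite [(Q * q)%N]mulnC E; ring.
by rewrite -(modnMDl Q (p * P)) addnC E' modnMDl.
Qed.

End VanishingSumsOfRootsOfUnity.

Lemma vanishing_sum_structure p q (z : algC) (I : finType) (e : I -> nat) :
  prime p -> prime q -> p != q -> odd p -> odd q -> #|I| = (p + q)%N ->
  (p * q).-primitive_root z -> \sum_k z ^+ e k = 0 -> (p * q %| \sum_k e k)%N ->
  [/\ forall k, (p %| e k)%N || (q %| e k)%N, exists k, ~~ (p %| e k)%N
    & exists k, ~~ (q %| e k)%N].
Proof.
move=> pp pq npq odd_p odd_q cardI pz sum0 pq_dvd_sum.
have cardI' : #|I| = (q + p)%N by rewrite addnC.
have classes_p := residue_class_sizes pp pq npq odd_p cardI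
  (dvdn_trans (dvdn_mulr q (dvdnn p)) pq_dvd_sum)
  (fun x => residue_count_one_mod pp pq npq pz x cardI sum0).
have qz : (q * p).-primitive_root z by rewrite mulnC.
have nqp : q != p by rewrite eq_sym.
have classes_q := residue_class_sizes pq pp nqp odd_q cardI'
  (dvdn_trans (dvdn_mull p (dvdnn q)) pq_dvd_sum)
  (fun x => residue_count_one_mod pq pp nqp qz x cardI' sum0).
have some_not_dvd r s : (1 < r)%N -> #|I| = (r + s)%N ->
    (\sum_k (e k == 0 %[mod r]) = s.+1)%N -> exists k, ~~ (r %| e k)%N.
  move=> r_gt1 cardIrs count0; have [k /= rNe | all_r] := pickP (fun k => ~~ (r %| e k)%N).
    by exists k.
  move: count0; rewrite (eq_bigr (fun _ => 1%N)) ?sum1_card ?cardIrs => [|k _].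
    by move=> card_eq; lia.
  by have /negbFE/eqP := all_r k; rewrite mod0n => ->.
split.
- move=> k; apply/negPn/negP => /norP [pNe qNe].
  have := residue_count_identity pp pq npq pz (e k) sum0.
  rewrite classes_p classes_q (negbTE pNe) (negbTE qNe) cardI !muln1 (bigD1 k) //= !eqxx.
  move/eqP; rewrite -{1}[(p + q)%N]addn0 eqn_add2l eq_sym !muln_eq0.
  by rewrite (gtn_eqF (prime_gt0 pp)) (gtn_eqF (prime_gt0 pq)) /= addn_eq0.
- by apply: some_not_dvd (prime_gt1 pp) cardI _; rewrite classes_p dvdn0.
- by apply: some_not_dvd (prime_gt1 pq) cardI' _; rewrite classes_q dvdn0.
Qed.

(* Two rows of n = p + q powers of a primitive pq-th root of unity z that are
   orthogonal, and whose exponent sums agree modulo pq, agree entrywise modulo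
   p or modulo q, yet differ somewhere modulo p and somewhere modulo q: apply
   the previous lemma to the quotients z^(a k) / z^(b k) = z^(a k - b k). *)
Lemma orthogonal_root_rows p q (z : algC) n (a b : 'I_n -> nat) :
  prime p -> prime q -> p != q -> odd p -> odd q -> n = (p + q)%N ->
  (p * q).-primitive_root z ->
  \sum_k z ^+ a k * (z ^+ b k)^* = 0 -> (\sum_k a k = \sum_k b k %[mod p * q])%N ->
  [/\ forall k, (a k == b k %[mod p]) || (a k == b k %[mod q]),
      exists k, (a k != b k %[mod p]) & exists k, (a k != b k %[mod q])]%N.
Proof.
move=> pp pq npq odd_p odd_q n_eq pz orth sum_eq.
have pq_gt0 : (0 < p * q)%N by rewrite muln_gt0 !prime_gt0.
pose e k := (a k + (p * q).-1 * b k)%N.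
have sum0 : \sum_k z ^+ e k = 0.
  rewrite -[RHS]orth; apply: eq_bigr => k _.
  have unity_b : (z ^+ b k) ^+ (p * q) = 1.
    by rewrite -exprM mulnC exprM (prim_expr_order pz) expr1n.
  by rewrite (conjC_unity_root pq_gt0 unity_b) -exprM mulnC exprD.
have pq_dvd_sum : (p * q %| \sum_k e k)%N.
  rewrite /e big_split /= -big_distrr /= /dvdn -modnDml sum_eq modnDml.
  by rewrite -{1}(mul1n (\sum_k b k)) -mulnDl add1n prednK // modnMr.
have cardI : #|'I_n| = (p + q)%N by rewrite card_ord.
have [every some_p some_q] :=
  vanishing_sum_structure pp pq npq odd_p odd_q cardI pz sum0 pq_dvd_sum.
have e_dvd d : (d %| p * q)%N -> forall k, (d %| e k)%N = (a k == b k %[mod d])%N.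
  by move=> d_dvd k; apply: dvdn_addMpred.
have e_p := e_dvd p (dvdn_mulr q (dvdnn p)).
have e_q := e_dvd q (dvdn_mull p (dvdnn q)).
split.
- by move=> k; rewrite -e_p -e_q.
- by have [k] := some_p; exists k; rewrite -e_p.
- by have [k] := some_q; exists k; rewrite -e_q.
Qed.

Lemma pairs_sharing_coordinate (T A B : eqType) (U : T -> A) (V : T -> B) a b c d :
  (forall x y, x != y -> U x = U y \/ V x = V y) -> U a <> U b -> V c <> V d -> False.
Proof.
move=> share Uab Vcd.
have V_eq x y : U x <> U y -> V x = V y.
  move=> Uxy; have [-> //|xy] := eqVneq x y.
  by case: (share x y xy).
suff V_const m : V m = V a by apply: Vcd; rewrite !V_const.
have [Uma | /eqP Uma] := eqVneq (U m) (U a); last exact: V_eq.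
by rewrite (V_eq a b Uab); apply: V_eq; rewrite Uma.
Qed.

Section CirculantMatrices.

Variables (n : nat) (H : 'M[algC]_n).
Hypotheses (circH : circulant H) (n_gt0 : (0 < n)%N).
Let c0 : 'I_n := Ordinal n_gt0.

Lemma circulant_entry_col0 i k : exists i', H i k = H i' c0.
Proof.
pose r := ((k + (n - i)) %% n)%N; have r_lt : (r < n)%N by rewrite ltn_pmod.
have [r_eq0 | r_gt0] := posnP r.
  by exists c0; apply: circH; rewrite /= subn0 add0n modnn.
have lt : (n - r < n)%N by rewrite ltn_subrL r_gt0 n_gt0.
by exists (Ordinal lt); apply: circH; rewrite /= add0n subKn ?(ltnW r_lt) // modn_mod.
Qed.

(* Each row of a circulant matrix is a permutation of row 0, so all rows have
   the same product. *)
Lemma circulant_row_prod i : \prod_k H i k = \prod_k H c0 k.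
Proof.
pose shift (k : 'I_n) : 'I_n := Ordinal (ltn_pmod (k + (n - i)) n_gt0).
have shift_inj : injective shift.
  move=> k k' /(congr1 val) /= /eqP; rewrite eqn_modDr => /eqP.
  by rewrite !modn_small // => /val_inj.
rewrite [RHS](reindex_inj shift_inj); apply: eq_bigr => k _.
by apply: circH; rewrite /= subn0 modnDr modn_mod.
Qed.

Variables (N : nat) (z : algC) (G : 'I_n -> 'I_n -> nat).
Hypotheses (pz : N.-primitive_root z) (HG : forall i k, H i k = z ^+ G i k).

(* Equal row products mean congruent exponent sums modulo N. *)
Lemma circulant_exponent_sum i j : (\sum_k G i k = \sum_k G j k %[mod N])%N.
Proof.
have row_power l : \prod_k H l k = z ^+ (\sum_k G l k).
  by rewrite -prodrXr; apply: eq_bigr => k _; rewrite HG.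
apply/eqP; rewrite -(eq_prim_root_expr pz) -!row_power.
by rewrite (circulant_row_prod i) (circulant_row_prod j).
Qed.

Lemma circulant_col0_disagree d i k j l : (d %| N)%N ->
  (G i k != G j l %[mod d])%N -> exists a b, (G a c0 != G b c0 %[mod d])%N.
Proof.
move=> d_dvd; have [a Ha] := circulant_entry_col0 i k.
have [b Hb] := circulant_entry_col0 j l.
have same_exp x y x' y' : H x y = H x' y' -> (G x y = G x' y' %[mod d])%N.
  rewrite !HG => /eqP; rewrite (eq_prim_root_expr pz) => /eqP eq_N.
  by rewrite -(modn_dvdm (G x y) d_dvd) -(modn_dvdm (G x' y') d_dvd) eq_N.
by exists a, b; rewrite -(same_exp _ _ _ _ Ha) -(same_exp _ _ _ _ Hb).
Qed.

End CirculantMatrices.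

Lemma unity_root_exponents N n (H : 'M[algC]_n) (z : algC) :
  N.-primitive_root z -> entries_roots_of_unity N H ->
  exists G : 'I_n -> 'I_n -> nat, forall i k, H i k = z ^+ G i k.
Proof.
move=> pz rootsH; exists (fun i k => val (sval (prim_rootP pz (rootsH i k)))).
by move=> i k; exact: svalP (prim_rootP pz (rootsH i k)).
Qed.

Theorem theorem1p3 (p q : nat) :
  prime p -> prime q -> (5 <= p)%N -> (5 <= q)%N -> p <> q ->
  forall H : 'M[algC]_(p + q), ~ Ccirc (p * q) H.
Proof.
move=> pp pq p_ge5 q_ge5 /eqP npq H [[_ orthH] [circH rootsH]].
have odd_prime r : prime r -> (5 <= r)%N -> odd r.
  by move=> pr r_ge5; case: (even_prime pr) => // r2; rewrite r2 in r_ge5.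
have [odd_p odd_q] := (odd_prime p pp p_ge5, odd_prime q pq q_ge5).
have pq_gt0 : (0 < p * q)%N by rewrite muln_gt0 !prime_gt0.
have [z pz] := C_prim_root_exists pq_gt0.
have [G HG] := unity_root_exponents pz rootsH.
have n_gt1 : (1 < p + q)%N by rewrite ltn_addr ?prime_gt1.
have n_gt0 := ltnW n_gt1; pose c0 : 'I_(p + q) := Ordinal n_gt0.
have orth i j : i != j -> \sum_k z ^+ G i k * (z ^+ G j k)^* = 0.
  by move=> ij; rewrite -[RHS](orthH i j ij); apply: eq_bigr => k _; rewrite !HG.
have rows_agree i j (ij : i != j) :=
  orthogonal_root_rows pp pq npq odd_p odd_q erefl pz (orth i j ij)
    (circulant_exponent_sum circH n_gt0 pz HG i j).
have [_ [k1 diff_p] [k2 diff_q]] := rows_agree (Ordinal n_gt1) c0 isT.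
have [a [b diff_ab]] :=
  circulant_col0_disagree circH n_gt0 pz HG (dvdn_mulr q (dvdnn p)) diff_p.
have [c [d diff_cd]] :=
  circulant_col0_disagree circH n_gt0 pz HG (dvdn_mull p (dvdnn q)) diff_q.
apply: (@pairs_sharing_coordinate _ _ _
  (fun r => G r c0 %% p)%N (fun r => G r c0 %% q)%N a b c d).
- move=> x y xy; have [agree _ _] := rows_agree x y xy.
  by case/orP: (agree c0) => /eqP; [left | right].
- exact/eqP.
- exact/eqP.
Qed.
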